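(* For all $Y,Z\in\mathbb{N}^\mathbb{N}$, the following are equivalent: (1) $Y=\mathcal{J}(Z)$; (2) for every $n$ there exists a finite string $\sigma_n\subset Z$ with $|\sigma_n|>n$ such that $Y\restriction n=J(\sigma_n)$.
   Context: Finite strings of natural numbers are coded by natural numbers via a fixed computable coding in which $\sigma\subsetneq\tau$ implies that the code of $\sigma$ is less than that of $\tau$; thus strings may be entries of other strings. For $\sigma$ a finite or infinite sequence, $\{e\}^\sigma_t(n)\downarrow$ means the $e$-th Turing machine on input $n$ with oracle $\sigma$ halts in fewer than $\min(|\sigma|,t)$ steps ($|\sigma|=\infty$ for infinite $\sigma$). For $Z\in\mathbb{N}^\mathbb{N}$, set $t_{-1}=1$ and $t_n=\max\{t_{n-1}+1,\ \mu t(\{n\}^Z_t(n)\downarrow)\}$, where $t_n=t_{n-1}+1$ if no such $t$ exists; then $\mathcal{J}(Z)\in\mathbb{N}^\mathbb{N}$ is defined by $\mathcal{J}(Z)(n)=Z\restriction t_n$. For a finite string $\sigma$, set $t_{-1}=1$ and $t_n=\max\{t_{n-1}+1,\ \mu t(\{n\}^{\sigma\restriction t}(n)\downarrow)\}$ (with $t_n=t_{n-1}+1$ if no such $t$), where $\{n\}^{\tau}(n)\downarrow$ means halting in fewer than $|\tau|$ steps and $\sigma\restriction t$ is the initial segment of length $\min(t,|\sigma|)$; then $J(\sigma)=\langle\sigma\restriction t_0,\dots,\sigma\restriction t_{k-1}\rangle$ where $k$ is least with $t_k>|\sigma|$. $Y\restriction n$ denotes the initial segment of $Y$ of length $n$.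 *)

From Stdlib Require Import ClassicalEpsilon.
From mathcomp Require Import all_boot.

Set Implicit Arguments.
Unset Strict Implicit.
Unset Printing Implicit Defensive.

(* Coding of finite strings of naturals by naturals: the standard      *)
(* MathComp bijection CodeSeq.code : seq nat -> nat, which is injective *)
(* and satisfies: sigma a proper initial segment of tau implies         *)
(* code sigma < code tau.                                               *)
Definition code (s : seq nat) : nat := CodeSeq.code s.

(* Step-bounded oracle Turing machines.                                *)
(* [halts e f x s] : the e-th machine on input x with (total) oracle f *)
(* halts in fewer than s steps.  The two properties of the fixed       *)
(* Turing machine model that the definitions rely on are recorded:     *)
(*  - monotonicity in the step bound;                                  *)
(*  - use principle: a computation halting in fewer than s steps only  *)
(*    reads the oracle below s.                                        *)
Record oracle_machines := OracleMachines {
  halts : nat -> (nat -> nat) -> nat -> nat -> bool;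
  halts_mono : forall e f x s s', s <= s' -> halts e f x s -> halts e f x s';
  halts_use : forall e f g x s, (forall i, i < s -> f i = g i) ->
                halts e f x s = halts e g x s
}.

(* Finite string used as an oracle: {e}^tau(x)↓ means halting in fewer *)
(* than |tau| steps (entries beyond |tau| are irrelevant by the use     *)
(* principle; we pad with 0).                                           *)
Definition haltsS (M : oracle_machines) (e : nat) (tau : seq nat) (x : nat) : bool :=
  halts M e (fun i => nth 0 tau i) x (size tau).

(* mu t. P t : least t with P t, and 0 if there is none. *)
Definition mu (P : pred nat) : nat :=
  match excluded_middle_informative (exists t, P t) with
  | left h => ex_minn h
  | right _ => 0
  end.

Definition restr (Z : nat -> nat) (n : nat) : seq nat := mkseq Z n.

Definition init_seg (sigma : seq nat) (Z : nat -> nat) : Prop :=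
  sigma = restr Z (size sigma).

(* tZ M Z i = t_{i-1} for the infinite sequence Z (so tZ M Z 0 = t_{-1} = 1). *)
Fixpoint tZ (M : oracle_machines) (Z : nat -> nat) (i : nat) : nat :=
  match i with
  | 0 => 1
  | n.+1 => maxn (tZ M Z n).+1 (mu (fun t => halts M n Z n t))
  end.

(* The jump operator  J(Z)(n) = Z | t_n. *)
Definition calJ (M : oracle_machines) (Z : nat -> nat) : nat -> nat :=
  fun n => code (restr Z (tZ M Z n.+1)).

(* tS M sigma i = t_{i-1} for the finite string sigma. *)
Fixpoint tS (M : oracle_machines) (sigma : seq nat) (i : nat) : nat :=
  match i with
  | 0 => 1
  | n.+1 => maxn (tS M sigma n).+1 (mu (fun t => haltsS M n (take t sigma) n))
  end.

(* J(sigma) = < sigma|t_0, ..., sigma|t_{k-1} >, k least with t_k > |sigma|. *)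
Definition Jfin (M : oracle_machines) (sigma : seq nat) : seq nat :=
  let k := mu (fun k => size sigma < tS M sigma k.+1) in
  [seq code (take (tS M sigma i.+1) sigma) | i <- iota 0 k].

From mathcomp Require Import all_boot.
From Stdlib Require Import ClassicalEpsilon FunctionalExtensionality.

(* By the use principle, a string sigma ⊂ Z computes the same stages t_j as Z
   as long as the stage t_j(Z) fits inside sigma.  Hence J(Z | t_n) is exactly
   the first n values of J(Z); conversely, J(Z)(n) is the n-th entry of J(sigma)
   for any sigma ⊂ Z that is long enough to contain Z | t_{n+1}. *)

Section Mu.

Variable P : pred nat.

Lemma muP : (exists t, P t) -> P (mu P) /\ forall t, P t -> mu P <= t.
Proof.
rewrite /mu; case: excluded_middle_informative => // h _.
by case: ex_minnP => m Pm Hm; split.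
Qed.

Lemma mu_eq0 : ~ (exists t, P t) -> mu P = 0.
Proof. by rewrite /mu; case: excluded_middle_informative. Qed.

Lemma mu_least m : P m -> (forall t, P t -> m <= t) -> mu P = m.
Proof.
move=> Pm min_m; have [Pmu min_mu] := muP (ex_intro _ m Pm).
by apply/eqP; rewrite eqn_leq min_mu // min_m.
Qed.

End Mu.

Lemma mu_minn {P Q : pred nat} {L : nat} :
  (forall t, Q t = P (minn t L)) -> mu P <= L -> mu Q = mu P.
Proof.
move=> QP muL; case: (excluded_middle_informative (exists t, P t)) => [exP|nexP].
  have [Pmu min_mu] := muP _ exP.
  apply: mu_least => [|t]; first by rewrite QP (minn_idPl muL).
  by rewrite QP => /min_mu /leq_trans; apply; apply: geq_minl.
rewrite (mu_eq0 _ nexP) mu_eq0 // => -[t]; rewrite QP => Pt.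
by apply: nexP; exists (minn t L).
Qed.

Lemma size_restr (Z : nat -> nat) n : size (restr Z n) = n.
Proof. exact: size_mkseq. Qed.

Lemma init_seg_restr (Z : nat -> nat) n : init_seg (restr Z n) Z.
Proof. by rewrite /init_seg size_restr. Qed.

Lemma take_restr (Z : nat -> nat) m n : m <= n -> take m (restr Z n) = restr Z m.
Proof.
move=> le_mn; apply: (@eq_from_nth _ 0) => [|i].
  by rewrite size_takel size_restr.
rewrite size_takel ?size_restr // => lt_im.
by rewrite nth_take // !nth_mkseq // (leq_trans lt_im le_mn).
Qed.

Section Stages.

Variable M : oracle_machines.

Lemma tZ_lt Z n : tZ M Z n < tZ M Z n.+1.
Proof. by rewrite /= leq_max leqnn. Qed.

Lemma tS_lt s n : tS M s n < tS M s n.+1.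
Proof. by rewrite /= leq_max leqnn. Qed.

Lemma tZ_gt Z n : n < tZ M Z n.
Proof. by elim: n => // n IH; apply: leq_ltn_trans IH (tZ_lt Z n). Qed.

Lemma tZ_mono Z : {homo tZ M Z : i j / i <= j}.
Proof. by apply: homo_leq => [//|???|n]; [apply: leq_trans | apply: ltnW; apply: tZ_lt]. Qed.

Lemma haltsS_take_init_seg n s {Z} t : init_seg s Z ->
  haltsS M n (take t s) n = halts M n Z n (minn t (size s)).
Proof.
rewrite /haltsS size_take_min => sZ; apply: halts_use => i.
rewrite leq_min => /andP[lt_it lt_is].
by rewrite nth_take // {1}sZ nth_mkseq.
Qed.

Lemma tS_tZ {s Z} j : init_seg s Z -> tZ M Z j <= size s -> tS M s j = tZ M Z j.
Proof.
move=> sZ; elim: j => // j IH le_js /=.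
have le_mu_s : mu (fun t => halts M j Z j t) <= size s.
  by apply: leq_trans le_js; apply: leq_maxr.
rewrite IH; last by apply: leq_trans le_js; apply/ltnW/tZ_lt.
by rewrite (mu_minn (fun t => haltsS_take_init_seg j _ t sZ) le_mu_s).
Qed.

Lemma size_Jfin s : size (Jfin M s) = mu (fun k => size s < tS M s k.+1).
Proof. by rewrite size_map size_iota. Qed.

Lemma nth_Jfin_init_seg {s Z i} : init_seg s Z ->
  i < size (Jfin M s) -> tZ M Z i.+1 <= size s -> nth 0 (Jfin M s) i = calJ M Z i.
Proof.
move=> sZ lt_iJ le_ts; have lt_ik := lt_iJ; rewrite size_Jfin in lt_ik.
rewrite (nth_map 0) ?size_iota // nth_iota // add0n (tS_tZ _ sZ) //.
by rewrite {1}sZ take_restr.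
Qed.

Lemma Jfin_restr_tZ Z n : Jfin M (restr Z (tZ M Z n)) = restr (calJ M Z) n.
Proof.
set s := restr Z (tZ M Z n).
have sZ : init_seg s Z := init_seg_restr Z _.
have size_s : size s = tZ M Z n := size_restr Z _.
have length_n : mu (fun k => size s < tS M s k.+1) = n.
  apply: mu_least => [|k].
    by rewrite /= {1}size_s -(tS_tZ _ sZ) ?size_s // tS_lt.
  rewrite ltnNge; apply: contraR; rewrite -ltnNge => lt_kn.
  by rewrite (tS_tZ _ sZ) size_s ?tZ_mono.
apply: (@eq_from_nth _ 0) => [|i]; first by rewrite size_Jfin length_n size_restr.
rewrite size_Jfin length_n => lt_in.
rewrite (nth_Jfin_init_seg sZ) ?size_Jfin ?length_n ?nth_mkseq // size_s tZ_mono //.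
Qed.

End Stages.

Theorem lemma4p5 (M : oracle_machines) (Y Z : nat -> nat) :
  Y = calJ M Z <->
  (forall n : nat, exists sigma : seq nat,
      init_seg sigma Z /\ n < size sigma /\ restr Y n = Jfin M sigma).
Proof.
split=> [-> n | JY].
  exists (restr Z (tZ M Z n)); rewrite Jfin_restr_tZ size_restr.
  by split; [apply: init_seg_restr | split; first exact: tZ_gt].
apply: functional_extensionality => n.
set N := maxn n.+1 (tZ M Z n.+1).
have [s [sZ [lt_Ns JYs]]] := JY N.
have lt_nN : n < N by rewrite leq_max leqnn.
have size_J : size (Jfin M s) = N by rewrite -JYs size_restr.
have le_ts : tZ M Z n.+1 <= size s by apply/ltnW/(leq_ltn_trans _ lt_Ns)/leq_maxr.
by rewrite -(nth_mkseq 0 Y lt_nN) -/(restr Y N) JYs (nth_Jfin_init_seg M sZ) // size_J.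
Qed.
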